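(* Let $G=(V_G,E_G)$ be a finite graph whose automorphism group acts vertex-transitively on $V_G$. Then the worst case of the graph semi-definite program for $H$ equals $-\sqrt{W}$, where $W$ is the worst case of the graph semi-definite program for $H^2$; moreover $W=\vartheta(G)$, and both worst cases are attained at $\vec J=|V_G|^{-1/2}(1,1,\ldots,1)$.
   Context: Let $G=(V_G,E_G)$ be a finite graph; rows and columns of the matrices below are indexed by $V_G$. For a real vector $\vec J=(J_\alpha)_{\alpha\in V_G}$: - The ''graph semi-definite program for $H^2$'' is: maximize $\sum_{\alpha,\beta}M_{\alpha,\beta}J_\alpha J_\beta$ over real symmetric positive semi-definite matrices $M$ with $M_{\alpha,\alpha}=1$ for all $\alpha$ and $M_{\alpha,\beta}=0$ whenever $(\alpha,\beta)\in E_G$. - The ''graph semi-definite program for $H$'' is: minimize $(\vec J,v)=\sum_\alpha J_\alpha v_\alpha$ over real vectors $v$ and matrices $M$ satisfying the constraints above, such that the block matrix $N=\begin{pmatrix}1 & v^T\\ v & M\end{pmatrix}$ is positive semi-definite. - The worst case of the program for $H^2$ is the maximum of its optimum over all $\vec J$ with $\sum_\alpha J_\alpha^2=1$. The worst case of the program for $H$ is the minimum of its optimum over all $\vec J$ with $\sum_\alpha J_\alpha^2=1$. $\vartheta(G)$ denotes the Lovász theta function: the maximum of the sum of all entries of a real symmetric positive semi-definite matrix $B$ with $\mathrm{tr}\,B=1$ and $B_{\alpha,\beta}=0$ whenever $(\alpha,\beta)\in E_G$. *)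

From HB Require Import structures.
From mathcomp Require Import all_boot all_order all_algebra all_fingroup.
From mathcomp Require Import reals.
Set Implicit Arguments. Unset Strict Implicit. Unset Printing Implicit Defensive.
Import Order.TTheory GRing.Theory Num.Theory.
Local Open Scope ring_scope.

Section GraphSDP.
Variable R : realType.

Definition is_greatest (S : R -> Prop) (w : R) := S w /\ forall x, S x -> x <= w.
Definition is_least (S : R -> Prop) (w : R) := S w /\ forall x, S x -> w <= x.

Definition psd (m : nat) (A : 'M[R]_m) :=
  A^T = A /\ forall x : 'cV[R]_m, 0 <= (x^T *m A *m x) 0 0.

Variable n : nat.
Variable e : rel 'I_n.

Definition simple_graph := symmetric e /\ irreflexive e.

Definition vertex_transitive :=
  forall x y : 'I_n, exists s : {perm 'I_n},
    (forall a b, e (s a) (s b) = e a b) /\ s x = y.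

Definition unit_vec (J : 'cV[R]_n) := \sum_a J a 0 ^+ 2 = 1.

Definition J_uniform : 'cV[R]_n := \col_(a < n) (Num.sqrt (n%:R))^-1.

Definition feasibleM (M : 'M[R]_n) :=
  psd M /\ (forall a, M a a = 1) /\ (forall a b, e a b -> M a b = 0).

Definition H2_values (J : 'cV[R]_n) : R -> Prop :=
  fun w => exists M, feasibleM M /\ w = \sum_a \sum_b M a b * J a 0 * J b 0.
Definition H2_opt (J : 'cV[R]_n) (w : R) := is_greatest (H2_values J) w.
Definition H2_worst (W : R) :=
  is_greatest (fun w => exists J, unit_vec J /\ H2_opt J w) W.

Definition Nmat (v : 'cV[R]_n) (M : 'M[R]_n) : 'M[R]_(1 + n) :=
  block_mx 1%:M v^T v M.
Definition H_values (J : 'cV[R]_n) : R -> Prop :=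
  fun w => exists v M, feasibleM M /\ psd (Nmat v M) /\
                       w = \sum_a J a 0 * v a 0.
Definition H_opt (J : 'cV[R]_n) (w : R) := is_least (H_values J) w.
Definition H_worst (W : R) :=
  is_least (fun w => exists J, unit_vec J /\ H_opt J w) W.

Definition theta_values : R -> Prop :=
  fun t => exists B : 'M[R]_n, psd B /\ \tr B = 1 /\
             (forall a b, e a b -> B a b = 0) /\ t = \sum_a \sum_b B a b.
Definition is_theta (t : R) := is_greatest theta_values t.

End GraphSDP.

From HB Require Import structures.
From mathcomp Require Import all_boot all_order all_algebra all_fingroup.
From mathcomp Require Import reals ring.
From mathcomp Require Import classical_sets boolp topology normedtype derive.
Set Implicit Arguments. Unset Strict Implicit. Unset Printing Implicit Defensive.
Import Order.TTheory GRing.Theory Num.Theory numFieldNormedType.Exports.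
Local Open Scope ring_scope.

(* For a unit vector J and a feasible M, the matrix diag(J) M diag(J) is
   admissible for theta(G) and has entry sum J^T M J, so no H^2-value exceeds
   theta(G).  Conversely, averaging a theta-admissible B over the automorphism
   group of G and scaling by |V_G| yields a feasible M whose value at the
   uniform vector is the entry sum of B; vertex-transitivity is what makes the
   averaged diagonal constant.  Hence the maximum of J^T M J over the compact
   feasible set at the uniform J is both theta(G) and the worst case W.  For H,
   positive semi-definiteness of [[1, v^T], [v, M]] forces (v.J)^2 <= J^T M J
   <= W, and v = - M J / sqrt(J^T M J) attains -sqrt W by Cauchy-Schwarz. *)

Section MxForm.
Variable R : comPzRingType.

Definition mxform m (M : 'M[R]_m) (x y : 'cV[R]_m) : R := (x^T *m M *m y) 0 0.

Lemma mxform_mul m k (P : 'M[R]_(m, k)) (M : 'M[R]_m) (x y : 'cV[R]_k) :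
  mxform (P^T *m M *m P) x y = mxform M (P *m x) (P *m y).
Proof. by rewrite /mxform trmx_mul !mulmxA. Qed.

Section Dim.
Variable m : nat.
Implicit Types (M N : 'M[R]_m) (x y z : 'cV[R]_m).

Lemma mxformE M x y : mxform M x y = \sum_a \sum_b x a 0 * M a b * y b 0.
Proof.
rewrite /mxform mxE exchange_big; apply: eq_bigr => b _.
by rewrite mxE mulr_suml; apply: eq_bigr => a _; rewrite mxE.
Qed.

Lemma mxformDl M x y z : mxform M (x + y) z = mxform M x z + mxform M y z.
Proof. by rewrite /mxform linearD !mulmxDl mxE. Qed.

Lemma mxformDr M x y z : mxform M z (x + y) = mxform M z x + mxform M z y.
Proof. by rewrite /mxform mulmxDr mxE. Qed.

Lemma mxformZl M c x y : mxform M (c *: x) y = c * mxform M x y.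
Proof. by rewrite /mxform linearZ /= -!scalemxAl mxE. Qed.

Lemma mxformZr M c x y : mxform M x (c *: y) = c * mxform M x y.
Proof. by rewrite /mxform -scalemxAr mxE. Qed.

Lemma mxformZ c M x y : mxform (c *: M) x y = c * mxform M x y.
Proof. by rewrite /mxform -scalemxAr -scalemxAl mxE. Qed.

Lemma mxformD M N x y : mxform (M + N) x y = mxform M x y + mxform N x y.
Proof. by rewrite /mxform mulmxDr mulmxDl mxE. Qed.

Lemma mxform0 x y : mxform 0 x y = 0.
Proof. by rewrite /mxform mulmx0 mul0mx mxE. Qed.

Lemma mxformC M x y : M^T = M -> mxform M x y = mxform M y x.
Proof.
move=> sM; rewrite /mxform -[in LHS](trmxK (x^T *m M *m y)) mxE.
by rewrite !trmx_mul trmxK sM mulmxA.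
Qed.

Lemma mxform1_mulmx M x y : M^T = M -> mxform 1%:M (M *m x) y = mxform M x y.
Proof. by move=> sM; rewrite /mxform mulmx1 trmx_mul sM. Qed.

Lemma mxform_delta M a b : mxform M (delta_mx a 0) (delta_mx b 0) = M a b.
Proof. by rewrite /mxform trmx_delta -rowE -colE !mxE. Qed.

Lemma mxform1 x y : mxform 1%:M x y = \sum_a x a 0 * y a 0.
Proof. by rewrite /mxform mulmx1 mxE; apply: eq_bigr => a _; rewrite mxE. Qed.

End Dim.

End MxForm.

Section Psd.
Variable R : realType.

Lemma psd_ge0 m (M : 'M[R]_m) x : psd M -> 0 <= mxform M x x.
Proof. by case=> _; apply. Qed.

Lemma psd1 m : psd (1%:M : 'M[R]_m).
Proof.
split=> [|x]; first exact: trmx1.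
by rewrite -/(mxform _ _ _) mxform1 sumr_ge0 // => a _; rewrite -expr2 sqr_ge0.
Qed.

Lemma psdD m (M N : 'M[R]_m) : psd M -> psd N -> psd (M + N).
Proof.
move=> [sM pM] [sN pN]; split=> [|x]; first by rewrite linearD /= sM sN.
by rewrite mulmxDr mulmxDl mxE addr_ge0.
Qed.

Lemma psdZ m c (M : 'M[R]_m) : 0 <= c -> psd M -> psd (c *: M).
Proof.
move=> c0 [sM pM]; split=> [|x]; first by rewrite linearZ /= sM.
by rewrite -/(mxform _ _ _) mxformZ mulr_ge0 // pM.
Qed.

Lemma psd_sum m (I : Type) (r : seq I) (P : pred I) (F : I -> 'M[R]_m) :
  (forall i, P i -> psd (F i)) -> psd (\sum_(i <- r | P i) F i).
Proof.
move=> pF; apply: big_ind => //; last exact: psdD.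
by split=> [|x]; rewrite ?trmx0 // mulmx0 mul0mx mxE.
Qed.

Lemma psd_mul m k (P : 'M[R]_(m, k)) (M : 'M[R]_m) : psd M -> psd (P^T *m M *m P).
Proof.
move=> [sM pM]; split=> [|x]; first by rewrite !trmx_mul trmxK sM mulmxA.
by rewrite -/(mxform _ _ _) mxform_mul; apply: pM.
Qed.

Lemma psd_CauchySchwarz m (M : 'M[R]_m) x y : psd M -> 0 < mxform M x x ->
  mxform M x y ^+ 2 <= mxform M x x * mxform M y y.
Proof.
move=> pM q_gt0; have [sM _] := pM.
set q := mxform M x x; set a := mxform M x y; set Q := mxform M y y.
have := psd_ge0 (y + (- (a / q)) *: x) pM.
rewrite mxformDl !mxformDr !mxformZl !mxformZr (mxformC y x sM) -/q -/a -/Q.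
have -> : Q + - (a / q) * a + (- (a / q) * a + - (a / q) * (- (a / q) * q))
          = (q * Q - a ^+ 2) / q by field; rewrite gt_eqF.
by rewrite pmulr_lge0 ?invr_gt0 // subr_ge0.
Qed.

Lemma psd_entry_le1 m (M : 'M[R]_m) : psd M -> (forall a, M a a = 1) ->
  forall a b, `|M a b| <= 1.
Proof.
move=> pM dM a b.
have := @psd_CauchySchwarz _ M (delta_mx a 0) (delta_mx b 0) pM.
rewrite !mxform_delta !dM mulr1 => /(_ ltr01) sq_le1.
by rewrite -sqrtr_sqr -sqrtr1 ler_wsqrtr.
Qed.

End Psd.

Section SchurComplement.
Variables (R : realType) (n : nat).
Implicit Types (v y J : 'cV[R]_n) (M : 'M[R]_n).

Lemma mxform_Nmat v M t y :
  mxform (Nmat v M) (col_mx t%:M y) (col_mx t%:M y)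
  = t ^+ 2 + 2 * t * mxform 1%:M v y + mxform M y y.
Proof.
rewrite /mxform /Nmat tr_col_mx tr_scalar_mx mul_row_block mul_row_col.
rewrite !mulmx1 mul_mx_scalar mul_scalar_mx mulmxDl -scalemxAl !mxE.
have -> : \sum_j y^T 0 j * v j 0 = \sum_j v^T 0 j * y j 0.
  by apply: eq_bigr => j _; rewrite !mxE mulrC.
by rewrite eqxx mulr1n; ring.
Qed.

Lemma Nmat_psd_sqr_le v M J : psd (Nmat v M) -> mxform 1%:M v J ^+ 2 <= mxform M J J.
Proof.
move=> pN; set s := mxform 1%:M v J.
have := psd_ge0 (col_mx (- s)%:M J) pN; rewrite mxform_Nmat -/s => h.
by rewrite -subr_ge0 (_ : _ - _ = (- s) ^+ 2 + 2 * - s * s + mxform M J J) //; ring.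
Qed.

Lemma psd_Nmat_opt M J : psd M -> 0 < mxform M J J ->
  psd (Nmat (- (Num.sqrt (mxform M J J))^-1 *: (M *m J)) M).
Proof.
move=> pM q_gt0; have [sM _] := pM; set q := mxform M J J; set r := Num.sqrt q.
have r_gt0 : 0 < r by rewrite sqrtr_gt0.
have rq : r ^+ 2 = q by rewrite sqr_sqrtr // ltW.
split=> [|x]; first by rewrite /Nmat tr_block_mx trmxK trmx1 sM.
rewrite -(vsubmxK x) (mx11_scalar (usubmx x)) -/(mxform _ _ _) mxform_Nmat.
set t := usubmx x 0 0; set y := dsubmx x.
rewrite mxformZl mxform1_mulmx //.
have := psd_CauchySchwarz y pM q_gt0; rewrite -/q -rq.
set a := mxform M J y; set Q := mxform M y y => cs.
(* Complete the square in t; the remainder is nonnegative by Cauchy-Schwarz. *)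
have -> : t ^+ 2 + 2 * t * (- r^-1 * a) + Q
          = (t - a / r) ^+ 2 + (r ^+ 2 * Q - a ^+ 2) / r ^+ 2.
  by field; rewrite gt_eqF.
by rewrite addr_ge0 ?sqr_ge0 // divr_ge0 ?sqr_ge0 // subr_ge0.
Qed.

End SchurComplement.

Lemma perm_mx_const (R : pzSemiRingType) n (s : {perm 'I_n}) (c : R) :
  perm_mx s *m const_mx c = const_mx c :> 'cV[R]_n.
Proof. by rewrite -row_permE; apply/matrixP => i j; rewrite !mxE. Qed.

Section Automorphisms.
Variables (n : nat) (e : rel 'I_n).
Implicit Types s t : {perm 'I_n}.

Definition graph_aut : {set {perm 'I_n}} :=
  [set s : {perm 'I_n} | [forall a, forall b, e (s a) (s b) == e a b]].

Lemma graph_autP s : reflect (forall a b, e (s a) (s b) = e a b) (s \in graph_aut).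
Proof.
rewrite inE; apply: (iffP forallP) => [h a b | h a].
  exact/eqP/(forallP (h a)).
by apply/forallP => b; apply/eqP/h.
Qed.

Lemma group_set_graph_aut : group_set graph_aut.
Proof.
apply/group_setP; split; first by apply/graph_autP => a b; rewrite !perm1.
by move=> s t /graph_autP hs /graph_autP ht; apply/graph_autP => a b; rewrite !permM ht hs.
Qed.

Canonical graph_aut_group := Group group_set_graph_aut.

Lemma vertex_transitiveP : vertex_transitive e ->
  forall a b, exists2 t, t \in graph_aut & t a = b.
Proof. by move=> vt a b; have [t [/graph_autP ht tab]] := vt a b; exists t. Qed.

End Automorphisms.

Section AutAverage.
Variables (R : realType) (n : nat) (e : rel 'I_n).
Local Notation Aut := (graph_aut e).
Implicit Types B : 'M[R]_n.

Definition aut_average B : 'M[R]_n :=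
  #|Aut|%:R^-1 *: \sum_(s in Aut) row_perm s (col_perm s B).

Lemma aut_averageE B a b :
  aut_average B a b = #|Aut|%:R^-1 * \sum_(s in Aut) B (s a) (s b).
Proof. by rewrite mxE summxE; congr (_ * _); apply: eq_bigr => s _; rewrite !mxE. Qed.

Lemma row_col_permE (s : {perm 'I_n}) B :
  row_perm s (col_perm s B) = (perm_mx s^-1)^T *m B *m perm_mx s^-1.
Proof. by rewrite row_permE col_permE tr_perm_mx invgK mulmxA. Qed.

Lemma card_graph_aut_neq0 : #|Aut|%:R != 0 :> R.
Proof. by rewrite pnatr_eq0 -lt0n; apply/card_gt0P; exists 1%g; exact: group1. Qed.

Lemma psd_aut_average B : psd B -> psd (aut_average B).
Proof.
move=> pB; apply: psdZ; first by rewrite invr_ge0 ler0n.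
by apply: psd_sum => s _; rewrite row_col_permE; apply: psd_mul.
Qed.

Lemma aut_average_edge B : (forall a b, e a b -> B a b = 0) ->
  forall a b, e a b -> aut_average B a b = 0.
Proof.
move=> eB a b eab; rewrite aut_averageE big1 ?mulr0 // => s /graph_autP hs.
by apply: eB; rewrite hs.
Qed.

Lemma aut_average_invariant (f : 'M[R]_n -> R) B :
  {morph f : M N / M + N} -> f 0 = 0 -> (forall c M, f (c *: M) = c * f M) ->
  (forall s, f (row_perm s (col_perm s B)) = f B) -> f (aut_average B) = f B.
Proof.
move=> fD f0 fZ fB; rewrite fZ (big_morph f fD f0) (eq_bigr _ (fun s _ => fB s)).
by rewrite sumr_const -[f B *+ _]mulr_natl mulrA mulVf ?mul1r // card_graph_aut_neq0.
Qed.

Lemma mxtrace_aut_average B : \tr (aut_average B) = \tr B.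
Proof.
apply: aut_average_invariant => [M N||c M|s]; rewrite ?mxtraceD ?mxtrace0 ?mxtraceZ //.
rewrite row_col_permE mxtrace_mulC mulmxA tr_perm_mx invgK -perm_mxM mulVg.
by rewrite perm_mx1 mul1mx.
Qed.

Lemma mxform_const_aut_average B (c : R) :
  mxform (aut_average B) (const_mx c) (const_mx c) = mxform B (const_mx c) (const_mx c).
Proof.
apply: (@aut_average_invariant (fun M : 'M[R]_n => mxform M (const_mx c) (const_mx c)) B)
  => [M N||d M|s]; rewrite ?mxformD ?mxform0 ?mxformZ //.
by rewrite row_col_permE mxform_mul perm_mx_const.
Qed.

Lemma aut_average_diag_const B : vertex_transitive e ->
  forall a b, aut_average B a a = aut_average B b b.
Proof.
move=> vt a b; have [t tA tab] := vertex_transitiveP vt a b.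
rewrite !aut_averageE (reindex_inj (mulgI t)) /=; congr (_ * _).
by apply: eq_big => [s|s _]; [rewrite groupMl | rewrite permM tab].
Qed.

Lemma aut_average_diag B : (0 < n)%N -> vertex_transitive e -> \tr B = 1 ->
  forall a, aut_average B a a = n%:R^-1.
Proof.
move=> n_gt0 vt trB a.
have : \tr (aut_average B) = n%:R * aut_average B a a.
  rewrite /mxtrace (eq_bigr _ (fun b _ => aut_average_diag_const B vt b a)).
  by rewrite sumr_const card_ord mulr_natl.
have n_neq0 : n%:R != 0 :> R by rewrite pnatr_eq0 -lt0n.
rewrite mxtrace_aut_average trB => tr1.
by apply: (mulfI n_neq0); rewrite -tr1 mulfV.
Qed.

Lemma feasible_aut_average B : (0 < n)%N -> vertex_transitive e ->
  psd B -> \tr B = 1 -> (forall a b, e a b -> B a b = 0) ->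
  feasibleM e (n%:R *: aut_average B).
Proof.
move=> n_gt0 vt pB trB eB; split; last split.
- by apply: psdZ; [exact: ler0n | exact: psd_aut_average].
- by move=> a; rewrite mxE aut_average_diag // mulfV // pnatr_eq0 -lt0n.
- by move=> a b eab; rewrite mxE aut_average_edge ?mulr0.
Qed.

End AutAverage.

Lemma feasible1 (R : realType) n (e : rel 'I_n) :
  simple_graph e -> feasibleM e (1%:M : 'M[R]_n).
Proof.
move=> [_ irr]; split; last split; first exact: psd1.
- by move=> a; rewrite mxE eqxx.
- by move=> a b eab; rewrite mxE; case: eqP eab => // <-; rewrite irr.
Qed.

(* Feasible matrices are handled through their encoding [vec_mx] by row
   vectors, the setting of [bounded_closed_compact]. *)
Section Compactness.
Variables (R : realType) (n : nat) (e : rel 'I_n).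
Local Notation V := 'rV[R]_(n * n).
Local Open Scope classical_set_scope.

Lemma continuous_vec_mx_entry a b : continuous (fun v : V => vec_mx v a b).
Proof.
have -> : (fun v : V => vec_mx v a b) = (fun v : V => v 0 (mxvec_index a b)).
  by apply/funext => v; rewrite mxE.
exact: coord_continuous.
Qed.

Lemma continuous_mxform_vec_mx x y : continuous (fun v : V => mxform (vec_mx v) x y).
Proof.
have -> : (fun v : V => mxform (vec_mx v) x y)
          = (fun v => \sum_a \sum_b x a 0 * y b 0 * vec_mx v a b).
  by apply/funext => v; rewrite mxformE; apply: eq_bigr => a _; apply: eq_bigr => b _; ring.
have term_cont (c : R) a b : continuous (fun v : V => c * vec_mx v a b).
  by move=> v; apply: continuousM; [exact: cst_continuous | exact: continuous_vec_mx_entry].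
apply: continuous_big => [|a _]; first exact: add_continuous.
by apply: continuous_big => [|b _]; [exact: add_continuous | exact: term_cont].
Qed.

Lemma closed_constraints (T U : topologicalType) (I : Type) (D : set I)
    (f : I -> T -> U) (C : I -> set U) :
  (forall i, continuous (f i)) -> (forall i, closed (C i)) ->
  closed [set v | forall i, D i -> C i (f i v)].
Proof.
move=> cf cC; have -> : [set v | forall i, D i -> C i (f i v)] = \bigcap_(i in D) f i @^-1` C i.
  by apply/seteqP; split=> v /= h i /h.
by apply: closed_bigI => i _; apply: preimage_closed => //; exact: cf.
Qed.

Lemma feasible_vec_mxE : [set v : V | feasibleM e (vec_mx v)] =
  [set v | forall ab : 'I_n * 'I_n, setT ab -> [set 0] (vec_mx v ab.1 ab.2 - vec_mx v ab.2 ab.1)]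
  `&` [set v | forall x, setT x -> [set r | 0 <= r] (mxform (vec_mx v) x x)]
  `&` [set v | forall a, setT a -> [set 1] (vec_mx v a a)]
  `&` [set v | forall ab : 'I_n * 'I_n, [set ab | e ab.1 ab.2] ab -> [set 0] (vec_mx v ab.1 ab.2)].
Proof.
apply/seteqP; split=> v /=.
- move=> [[sM pM] [dM eM]]; do 3?split=> //.
  + by move=> [a b] _ /=; rewrite -[in X in X - _]sM mxE subrr.
  + by move=> x _; exact: pM.
  + by move=> [a b] /= /eM.
- move=> [[[hs hp] hd] he]; do 3?split=> //.
  + by apply/matrixP => a b; rewrite mxE; apply/eqP; rewrite -subr_eq0 (hs (b, a)).
  + by move=> x; exact: hp.
  + by move=> a; exact: hd.
  + by move=> a b eab; exact: (he (a, b)).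
Qed.

Lemma closed_feasible : closed [set v : V | feasibleM e (vec_mx v)].
Proof.
have entryB a b : continuous (fun v : V => vec_mx v a b - vec_mx v b a).
  by move=> v; apply: continuousB; exact: continuous_vec_mx_entry.
rewrite feasible_vec_mxE; apply: closedI; [apply: closedI; [apply: closedI|]|].
- exact: (@closed_constraints V R _ setT (fun ab v => vec_mx v ab.1 ab.2 - vec_mx v ab.2 ab.1)
    (fun=> [set 0]) (fun ab => entryB ab.1 ab.2) (fun=> @closed_eq _ 0)).
- exact: (@closed_constraints V R _ setT (fun x v => mxform (vec_mx v) x x)
    (fun=> [set r | 0 <= r]) (fun x => @continuous_mxform_vec_mx x x) (fun=> @closed_ge _ 0)).
- exact: (@closed_constraints V R _ setT (fun a v => vec_mx v a a)
    (fun=> [set 1]) (fun a => @continuous_vec_mx_entry a a) (fun=> @closed_eq _ 1)).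
- exact: (@closed_constraints V R _ _ (fun ab v => vec_mx v ab.1 ab.2)
    (fun=> [set 0]) (fun ab => @continuous_vec_mx_entry ab.1 ab.2) (fun=> @closed_eq _ 0)).
Qed.

Lemma feasible_norm_le1 (v : V) : feasibleM e (vec_mx v) -> `|v| <= 1.
Proof.
move=> [pM [dM _]]; change (mx_norm v <= 1); rewrite mx_normrE.
apply: bigmax_le => // -[i k] _ /=; rewrite (ord1 i); case: (mxvec_indexP k) => a b.
by have := psd_entry_le1 pM dM a b; rewrite mxE.
Qed.

Lemma compact_feasible : compact [set v : V | feasibleM e (vec_mx v)].
Proof.
apply: bounded_closed_compact; last exact: closed_feasible.
apply: filterS (nbhs_pinfty_ge (num_real 1)) => r r_ge1 v /feasible_norm_le1.
by move/le_trans; apply.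
Qed.

Lemma feasible_maximizer (J : 'cV[R]_n) : simple_graph e ->
  exists2 M0, feasibleM e M0 & forall M, feasibleM e M -> mxform M J J <= mxform M0 J J.
Proof.
move=> sg; set A := [set v : V | feasibleM e (vec_mx v)].
have A_neq0 : A !=set0 by exists (mxvec 1%:M); rewrite /A /= mxvecK; exact: feasible1.
have [c Ac c_max] := compact_EVT_max A_neq0 compact_feasible
  (continuous_subspaceT (@continuous_mxform_vec_mx J J)).
exists (vec_mx c); first by move: Ac; rewrite inE.
by move=> M fM; have := c_max (mxvec M); rewrite mxvecK; apply; rewrite inE /A /= mxvecK.
Qed.

End Compactness.

Section GraphSDP.
Variables (R : realType) (n : nat) (e : rel 'I_n).
Local Notation ones := (const_mx 1 : 'cV[R]_n).
Local Notation Ju := (J_uniform R n).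
Implicit Types (M B : 'M[R]_n) (v J : 'cV[R]_n).

Lemma H2_objectiveE M J : \sum_a \sum_b M a b * J a 0 * J b 0 = mxform M J J.
Proof. by rewrite mxformE; apply: eq_bigr => a _; apply: eq_bigr => b _; ring. Qed.

Lemma H_objectiveE v J : \sum_a J a 0 * v a 0 = mxform 1%:M v J.
Proof. by rewrite mxform1; apply: eq_bigr => a _; rewrite mulrC. Qed.

Lemma entry_sumE B : \sum_a \sum_b B a b = mxform B ones ones.
Proof. by rewrite mxformE; apply: eq_bigr => a _; apply: eq_bigr => b _; rewrite !mxE mulr1 mul1r. Qed.

Lemma mxform1_unit J : unit_vec J -> mxform 1%:M J J = 1.
Proof. by move=> uJ; rewrite mxform1 -uJ; apply: eq_bigr => a _; rewrite expr2. Qed.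

Lemma mxform_uniform M : (0 < n)%N -> mxform M Ju Ju = n%:R^-1 * mxform M ones ones.
Proof.
move=> n_gt0; have -> : Ju = (Num.sqrt n%:R)^-1 *: ones.
  by apply/matrixP => a b; rewrite !mxE mulr1.
by rewrite mxformZl mxformZr mulrA -expr2 exprVn sqr_sqrtr ?ler0n.
Qed.

Lemma unit_vec_uniform : (0 < n)%N -> unit_vec Ju.
Proof.
move=> n_gt0; rewrite /unit_vec (eq_bigr (fun _ => n%:R^-1)) => [|a _].
  by rewrite sumr_const card_ord -[_ *+ n]mulr_natl mulfV // pnatr_eq0 -lt0n.
by rewrite mxE exprVn sqr_sqrtr ?ler0n.
Qed.

Lemma theta_values_reweight J M : unit_vec J -> feasibleM e M ->
  theta_values e (mxform M J J).
Proof.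
move=> uJ [pM [dM eM]]; set D := diag_mx J^T.
have DE a b : (D^T *m M *m D) a b = J a 0 * M a b * J b 0.
  by rewrite tr_diag_mx mul_diag_mx mul_mx_diag !mxE.
exists (D^T *m M *m D); split; [exact: psd_mul | split; [|split]].
- by rewrite /mxtrace -uJ; apply: eq_bigr => a _; rewrite DE dM mulr1 expr2.
- by move=> a b /eM eab; rewrite DE eab mulr0 mul0r.
- rewrite entry_sumE mxform_mul; suff -> : D *m ones = J by [].
  by apply/matrixP => a b; rewrite mul_diag_mx !mxE mulr1 (ord1 b).
Qed.

Lemma theta_values_uniform t : (0 < n)%N -> vertex_transitive e ->
  theta_values e t -> exists2 M, feasibleM e M & t = mxform M Ju Ju.
Proof.
move=> n_gt0 vt [B [pB [trB [eB ->]]]].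
exists (n%:R *: aut_average e B); first exact: feasible_aut_average.
rewrite mxform_uniform // mxformZ mxform_const_aut_average entry_sumE mulKf //.
by rewrite pnatr_eq0 -lt0n.
Qed.

Section Optimum.
Hypotheses (n_gt0 : (0 < n)%N) (sg : simple_graph e) (vt : vertex_transitive e).
Variable M0 : 'M[R]_n.
Hypotheses (feasM0 : feasibleM e M0)
  (maxM0 : forall M, feasibleM e M -> mxform M Ju Ju <= mxform M0 Ju Ju).
Local Notation W := (mxform M0 Ju Ju).

Lemma theta_values_le t : theta_values e t -> t <= W.
Proof. by case/(theta_values_uniform n_gt0 vt) => M /maxM0 ? ->. Qed.

Lemma is_theta_opt : is_theta e W.
Proof.
split; last exact: theta_values_le.
exact: theta_values_reweight (unit_vec_uniform n_gt0) feasM0.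
Qed.

Lemma H2_values_le J w : unit_vec J -> H2_values e J w -> w <= W.
Proof.
move=> uJ [M [feasM ->]]; rewrite H2_objectiveE.
exact/theta_values_le/theta_values_reweight.
Qed.

Lemma H2_opt_uniform : H2_opt e Ju W.
Proof.
split=> [|w]; last exact: H2_values_le (unit_vec_uniform n_gt0).
by exists M0; rewrite H2_objectiveE.
Qed.

Lemma H_values_ge J w : unit_vec J -> H_values e J w -> - Num.sqrt W <= w.
Proof.
move=> uJ [v [M [feasM [psdN ->]]]]; rewrite H_objectiveE lerNl.
have sq_le : mxform 1%:M v J ^+ 2 <= W.
  apply: le_trans (Nmat_psd_sqr_le J psdN) _.
  exact/theta_values_le/theta_values_reweight.
rewrite (le_trans (ler_norm _)) // normrN -sqrtr_sqr ler_wsqrtr //.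
Qed.

Lemma H_values_uniform : H_values e Ju (- Num.sqrt W).
Proof.
have W_gt0 : 0 < W.
  apply: lt_le_trans (maxM0 (feasible1 R sg)).
  by rewrite mxform1_unit ?ltr01 //; exact: unit_vec_uniform.
exists (- (Num.sqrt W)^-1 *: (M0 *m Ju)), M0; split=> //; split.
  exact: psd_Nmat_opt (proj1 feasM0) W_gt0.
rewrite H_objectiveE mxformZl mxform1_mulmx; last by case: feasM0 => -[].
rewrite -[X in _ * X](sqr_sqrtr (ltW W_gt0)); field.
by rewrite gt_eqF // sqrtr_gt0.
Qed.

Lemma H_opt_uniform : H_opt e Ju (- Num.sqrt W).
Proof.
split=> [|w]; first exact: H_values_uniform.
exact: H_values_ge (unit_vec_uniform n_gt0).
Qed.

Lemma H2_worst_opt : H2_worst e W.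
Proof.
split=> [|w [J [uJ [H2w _]]]]; last exact: H2_values_le uJ H2w.
by exists Ju; split; [exact: unit_vec_uniform | exact: H2_opt_uniform].
Qed.

Lemma H_worst_opt : H_worst e (- Num.sqrt W).
Proof.
split=> [|w [J [uJ [Hw _]]]]; last exact: H_values_ge uJ Hw.
by exists Ju; split; [exact: unit_vec_uniform | exact: H_opt_uniform].
Qed.

End Optimum.

End GraphSDP.

Theorem mainTheorem1 (R : realType) (n : nat) (e : rel 'I_n) :
  (0 < n)%N -> simple_graph e -> vertex_transitive e ->
  exists W : R,
    [/\ H2_worst e W, H2_opt e (J_uniform R n) W, is_theta e W,
        H_worst e (- Num.sqrt W) & H_opt e (J_uniform R n) (- Num.sqrt W)].
Proof.
move=> n_gt0 sg vt.
have [M0 feasM0 maxM0] := feasible_maximizer (J_uniform R n) sg.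
exists (mxform M0 (J_uniform R n) (J_uniform R n)); split.
- exact (H2_worst_opt n_gt0 vt feasM0 maxM0).
- exact (H2_opt_uniform n_gt0 vt feasM0 maxM0).
- exact (is_theta_opt n_gt0 vt feasM0 maxM0).
- exact (H_worst_opt n_gt0 sg vt feasM0 maxM0).
- exact (H_opt_uniform n_gt0 sg vt feasM0 maxM0).
Qed.
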